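(* For any $g\ge2$, $n\ge1$ and any $a_1,\dots,a_n\in\mathbb{Z}_{\ge0}$, $$P_{g,n+1}(a_1,\dots,a_n,1)-P_{g,n+1}(a_1,\dots,a_n,0)=P_{g,n}(a_1,\dots,a_n)\cdot\Big(4\sum_{i=1}^na_i-8g+10-2n\Big).$$
   Context: For $g\ge2$, $m\ge1$, $$P_{g,m}(a_1,\dots,a_m):=\sum_{k=1}^m\frac{(-1)^k(2g-3+k)!}{k!}\sum_{(I_1,\dots,I_k)}\ \sum_{\substack{d_1,\dots,d_k\in\mathbb{Z}_{\ge0}\\ d_1+\cdots+d_k=g-2+m}}\prod_{j=1}^k\binom{2a_{[I_j]}+1}{2d_j}\prod_{i=1}^{|I_j|-1}(2d_j+1-2i),$$ where $(I_1,\dots,I_k)$ runs over ordered $k$-tuples of nonempty pairwise disjoint subsets of $\{1,\dots,m\}$ with union $\{1,\dots,m\}$, $a_{[I]}:=\sum_{\ell\in I}a_\ell$, and $\binom{x}{r}$ is the usual binomial coefficient (zero if $r>x$). *)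

From HB Require Import structures.
From mathcomp Require Import all_boot all_order all_algebra.
Set Implicit Arguments. Unset Strict Implicit. Unset Printing Implicit Defensive.
Import Order.TTheory GRing.Theory Num.Theory.
Local Open Scope ring_scope.

(* Indices {1,...,m} are represented by 'I_m = {0,...,m-1}; the tuple
   (a_1,...,a_m) is the sequence a with size a = m, a_i = nth 0 a (i-1). *)

Definition asum (a : seq nat) (I : {set 'I_(size a)}) : nat :=
  (\sum_(l in I) nth 0%N a l)%N.

Definition ordered_set_partition (m k : nat) (I : {ffun 'I_k -> {set 'I_m}}) : bool :=
  [forall j, I j != set0] &&
  [forall j1, forall j2, (j1 != j2) ==> [disjoint I j1 & I j2]] &&
  (\bigcup_(j < k) I j == [set: 'I_m]).

Definition Pterm (a : seq nat) (k : nat)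
    (I : {ffun 'I_k -> {set 'I_(size a)}}) (d : 'I_k -> nat) : rat :=
  \prod_(j < k)
    ((('C((asum (I j)).*2.+1, (d j).*2))%:R : rat) *
     \prod_(1 <= i < #|I j|) (((d j).*2.+1)%:R - (i.*2)%:R)).

Definition P (g : nat) (a : seq nat) : rat :=
  let m := size a in
  let N := (g - 2 + m)%N in
  \sum_(1 <= k < m.+1)
    ((-1) ^+ k * (((2 * g - 3 + k)`!)%:R / (k`!)%:R) *
     \sum_(I : {ffun 'I_k -> {set 'I_m}} | ordered_set_partition I)
       \sum_(d : {ffun 'I_k -> 'I_N.+1} | (\sum_(j < k) (d j : nat))%N == N)
         Pterm I (fun j => (d j : nat))).

From HB Require Import structures.
From mathcomp Require Import all_boot all_order all_algebra.
From mathcomp Require Import ring zify.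
Set Implicit Arguments. Unset Strict Implicit. Unset Printing Implicit Defensive.
Import Order.TTheory GRing.Theory Num.Theory.
Local Open Scope ring_scope.

(* An ordered set partition (I_1,...,I_k) of the m points is the family of
   fibres of a unique surjective labelling of the points by k labels, and the
   inner sum over (d_1,...,d_k) is the coefficient of x^N, N = g-2+m, in a
   product with one polynomial per block,
     B_{A,s}(x) = sum_d C(2A+1,2d) prod_(1 <= i < s) (2d+1-2i) x^d,
   where A and s are the weight and the size of the block.  Hence
   P_{g,m}(a) = sum_k c_k [x^N] Phi_k, with Phi_k the sum over surjective
   labellings of the product of the B's (lemma P_as_Q).
   Giving a new point weight 1 instead of 0 inside a block acts by
     B_{A+1,s+1} - B_{A,s+1} = x (4A+3 - 2x d/dx) B_{A,s}   (block_poly_step).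
   Summing over the block that receives the new point (a Leibniz rule), plus
   the case where the new point forms a block on its own, gives (Phi_step)
     Phi^1_{k+1} - Phi^0_{k+1} = x (4|a|+3(k+1) - 2x d/dx) Phi_{k+1} + 3(k+1) x Phi_k,
   and the recursion (k+1) c_{k+1} = -(2g-2+k) c_k makes the sum over k
   telescope to the stated factor (Q_step). *)

Lemma reindex_inj (R : Type) (idx : R) (op : Monoid.com_law idx) (I J : finType)
    (h : I -> J) (P : pred J) (F : J -> R) :
  injective h -> (forall j, P j -> exists i, j = h i) ->
  \big[op/idx]_(j | P j) F j = \big[op/idx]_(i | P (h i)) F (h i).
Proof.
move=> h_inj h_onto.
rewrite -(big_imset F (A := [pred i | P (h i)])) => [|x y _ _]; last exact: h_inj.
apply: eq_bigl => j; apply/idP/idP => [Pj | /imsetP [i Pi ->]].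
  by have [i ji] := h_onto j Pj; apply/imsetP; exists i; rewrite // inE -ji.
by move: Pi; rewrite inE.
Qed.
Arguments reindex_inj {R idx op I J} h {P F}.

(* A function on 'I_k.+1 is a value at the last point [ord_max] together with
   a function on the first k points, which sit in 'I_k.+1 as [lift ord_max]. *)
Definition extend k (T : finType) (xd : T * {ffun 'I_k -> T}) : {ffun 'I_k.+1 -> T} :=
  [ffun j => if unlift ord_max j is Some j' then xd.2 j' else xd.1].

Lemma extend_max k (T : finType) (xd : T * {ffun 'I_k -> T}) : extend xd ord_max = xd.1.
Proof. by rewrite ffunE unlift_none. Qed.

Lemma extend_lift k (T : finType) (xd : T * {ffun 'I_k -> T}) j :
  extend xd (lift ord_max j) = xd.2 j.
Proof. by rewrite ffunE liftK. Qed.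

(* big_ord_recr indexes the first k points by widen_ord, i.e. by lift ord_max. *)
Lemma widen_lift k (j : 'I_k) : widen_ord (leqnSn k) j = lift ord_max j.
Proof. by apply: val_inj; rewrite /= /bump leqNgt ltn_ord. Qed.

Lemma extend_inj k (T : finType) : injective (@extend k T).
Proof.
move=> [x d] [y e] /ffunP eq_xd; have := eq_xd ord_max; rewrite !extend_max /= => ->.
by congr pair; apply/ffunP => j; have := eq_xd (lift ord_max j); rewrite !extend_lift.
Qed.

Lemma extend_restrict k (T : finType) (e : {ffun 'I_k.+1 -> T}) :
  e = extend (e ord_max, [ffun j => e (lift ord_max j)]).
Proof. by apply/ffunP => j; rewrite ffunE /=; case: unliftP => [j' ->|->]; rewrite ?ffunE. Qed.

Lemma sum_extend (V : nmodType) k (T : finType) (P : pred {ffun 'I_k.+1 -> T})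
    (F : {ffun 'I_k.+1 -> T} -> V) :
  \sum_(e | P e) F e = \sum_(xd | P (extend xd)) F (extend xd).
Proof.
apply: reindex_inj; first exact: extend_inj.
by move=> e _; exists (e ord_max, [ffun j => e (lift ord_max j)]); apply: extend_restrict.
Qed.

Lemma big_extend (R : Type) (idx : R) (op : Monoid.law idx) k (T : finType)
    (G : 'I_k.+1 -> T -> R) (xd : T * {ffun 'I_k -> T}) :
  \big[op/idx]_(j < k.+1) G j (extend xd j) =
  op (\big[op/idx]_(j < k) G (lift ord_max j) (xd.2 j)) (G ord_max xd.1).
Proof.
rewrite big_ord_recr /= extend_max; congr (op _ _).
by apply: eq_bigr => j _; rewrite widen_lift extend_lift.
Qed.

Lemma coef_prod (R : comNzRingType) k B N (p : 'I_k -> {poly R}) : (N <= B)%N ->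
  (\prod_(j < k) p j)`_N =
  \sum_(d : {ffun 'I_k -> 'I_B.+1} | (\sum_(j < k) d j)%N == N) \prod_(j < k) (p j)`_(d j).
Proof.
elim: k N p => [|k IH] N p leNB.
  rewrite big_ord0 coef1; under eq_bigl do rewrite big_ord0.
  case: N leNB => [|N] _ /=; last by rewrite big_pred0.
  by under eq_bigr do rewrite big_ord0; rewrite sumr_const card_ffun !card_ord.
have sum_ext (xd : 'I_B.+1 * {ffun 'I_k -> 'I_B.+1}) :
    (\sum_(j < k.+1) extend xd j = \sum_(j < k) xd.2 j + xd.1)%N.
  exact: (big_extend _ (fun _ (y : 'I_B.+1) => y : nat)).
have prod_ext (xd : 'I_B.+1 * {ffun 'I_k -> 'I_B.+1}) :
    \prod_(j < k.+1) (p j)`_(extend xd j) =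
    (\prod_(j < k) (p (lift ord_max j))`_(xd.2 j)) * (p ord_max)`_xd.1.
  exact: (big_extend _ (fun j (y : 'I_B.+1) => (p j)`_y)).
transitivity (\sum_(x < B.+1) \sum_(d : {ffun 'I_k -> 'I_B.+1} |
                (\sum_(j < k) d j + x == N)%N)
     (\prod_(j < k) (p (lift ord_max j))`_(d j)) * (p ord_max)`_x); last first.
  by rewrite sum_extend pair_big_dep; apply: eq_big => -[x d]; rewrite ?sum_ext ?prod_ext.
rewrite big_ord_recr coefMr /= (big_ord_widen B.+1 (fun x =>
  (\prod_(i < k) p (widen_ord (leqnSn k) i))`_(N - x) * (p ord_max)`_x)) //.
rewrite big_mkcond /=; apply: eq_bigr => x _; case: ifP => le_xN.
  rewrite (IH (N - x)%N); last by lia.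
  rewrite big_distrl /=; apply: eq_big => [d|d _]; first by apply/eqP/eqP; lia.
  by under eq_bigr do rewrite widen_lift.
by rewrite big_pred0 // => d; apply/eqP; lia.
Qed.

Lemma deriv_prod (R : comNzRingType) k (p : 'I_k -> {poly R}) :
  (\prod_(j < k) p j)^`() = \sum_(j < k) (p j)^`() * \prod_(i < k | i != j) p i.
Proof.
have prod_recr (n : nat) (P : pred 'I_n.+1) (F : 'I_n.+1 -> {poly R}) :
    \prod_(i < n.+1 | P i) F i = \prod_(i < n | P (widen_ord (leqnSn n) i))
      F (widen_ord (leqnSn n) i) * (if P ord_max then F ord_max else 1).
  by rewrite big_mkcond big_ord_recr /= -big_mkcond.
elim: k p => [|k IH] p; first by rewrite !big_ord0 derivC.
rewrite big_ord_recr derivM IH /= big_ord_recr /= prod_recr eqxx mulr1 big_distrl /=.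
congr (_ + _); last first.
  by rewrite mulrC; congr (_ * _); apply: eq_bigl => i; rewrite neq_ltn /= ltn_ord.
apply: eq_bigr => j _; rewrite prod_recr /= -mulrA; congr (_ * (_ * _)).
by rewrite ifT // neq_ltn /= ltn_ord orbT.
Qed.

(* The operator p |-> x (c - 2 x d/dx) p, through which adding a point of
   weight one to a block acts on its polynomial. *)
Definition raise (R : comNzRingType) (c : R) (p : {poly R}) : {poly R} :=
  'X * (c *: p - 2%:R *: ('X * p^`())).

Lemma coef_raise (R : comNzRingType) (c : R) p N :
  (raise c p)`_N.+1 = (c - 2 * N%:R) * p`_N.
Proof.
have coef_euler : ('X * p^`())`_N = p`_N *+ N.
  by rewrite coefXM; case: N => [|N] //=; rewrite coef_deriv.
by rewrite /raise coefXM /= coefB !coefZ coef_euler -mulr_natr; ring.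
Qed.

Lemma raise_sum (R : comNzRingType) (c : R) (I : finType) (P : pred I) (F : I -> {poly R}) :
  \sum_(i | P i) raise c (F i) = raise c (\sum_(i | P i) F i).
Proof.
by rewrite /raise -mulr_sumr sumrB -!scaler_sumr -mulr_sumr (linear_sum deriv).
Qed.

Lemma raise_prod (R : comNzRingType) k (c : 'I_k -> R) (p : 'I_k -> {poly R}) :
  \sum_(j < k) raise (c j) (p j) * \prod_(i < k | i != j) p i =
  raise (\sum_(j < k) c j) (\prod_(j < k) p j).
Proof.
have split_term j : raise (c j) (p j) * \prod_(i < k | i != j) p i =
    'X * ((c j)%:P * \prod_(i < k) p i) -
    'X * (2%:R%:P * 'X * ((p j)^`() * \prod_(i < k | i != j) p i)).
  by rewrite /raise [\prod_(i < k) p i](bigD1 j) //= -!mul_polyC; ring.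
under eq_bigr do rewrite split_term.
rewrite sumrB -!mulr_sumr -big_distrl /= -deriv_prod -rmorph_sum.
by rewrite /raise -!mul_polyC; ring.
Qed.

Definition block_coef (A s d : nat) : rat :=
  'C(A.*2.+1, d.*2)%:R * \prod_(1 <= i < s) ((d.*2.+1)%:R - (i.*2)%:R).

Definition block_poly (A s : nat) : {poly rat} := \poly_(d < A.+1) block_coef A s d.

(* The coefficients of the block polynomial (block_coef vanishes beyond degree A). *)
Lemma coef_block_poly A s d : (block_poly A s)`_d = block_coef A s d.
Proof.
rewrite coef_poly; case: ltnP => // ltAd.
by rewrite /block_coef bin_small ?mul0r //; lia.
Qed.

Lemma block_poly00 : block_poly 0 0 = 1.
Proof.
apply/polyP => d; rewrite coef_block_poly coef1 /block_coef big_geq // mulr1.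
by case: d => [|d] //=; rewrite bin_small //; lia.
Qed.

Lemma binS2 n r :
  'C(n.+2, r.+2)%:R = 'C(n, r.+2)%:R + 2 * 'C(n, r.+1)%:R + 'C(n, r)%:R :> rat.
Proof. by rewrite !binS !natrD; ring. Qed.

Lemma bin_odd_shift A d :
  (d.*2.+1)%:R * 'C(A.*2.+1, d.*2.+1)%:R =
  ((A.*2.+1)%:R - (d.*2)%:R) * 'C(A.*2.+1, d.*2)%:R :> rat.
Proof.
have [leDA | ltAd] := leqP d A; last by rewrite !bin_small ?mulr0 //; lia.
by rewrite -natrM mul_bin_left natrM natrB //; lia.
Qed.

Lemma odd_prodS s d :
  \prod_(1 <= i < s.+2) ((d.+1.*2.+1)%:R - (i.*2)%:R) =
  (d.*2.+1)%:R * \prod_(1 <= i < s.+1) ((d.*2.+1)%:R - (i.*2)%:R) :> rat.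
Proof.
have shift2 (x y : nat) : (x.+2)%:R - (y.+2)%:R = x%:R - y%:R :> rat.
  by rewrite -[x.+2]addn2 -[y.+2]addn2 !natrD; ring.
rewrite big_nat_recl // doubleS shift2 subr0; congr (_ * _).
by apply: eq_bigr => i _; rewrite !doubleS shift2.
Qed.

Lemma block_coef_step A s d : (s = 0 -> A = 0)%N ->
  block_coef A.+1 s.+1 d.+1 - block_coef A s.+1 d.+1 =
  ((4 * A + 3)%:R - 2 * d%:R) * block_coef A s d.
Proof.
rewrite /block_coef; case: s => [/(_ erefl) -> | s _].
  rewrite !big_geq // !mulr1.
  case: d => [|d]; last by rewrite !bin_small ?subr0 ?mulr0 //; lia.
  by rewrite bin0 (@bin_small 1 2) // subr0 mulr0 subr0 mulr1.
rewrite odd_prodS !doubleS (binS2 A.*2.+1) -mulrBl.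
have := bin_odd_shift A d; rewrite -[d.*2.+1]addn1 -[A.*2.+1]addn1 -!muln2 !natrD !natrM.
move: ('C(_, _ + 1))%:R ('C(_, _ * 2))%:R (\prod_(_ <= _ < _) _) => C1 C0 Pi oddC.
transitivity (2 * ((d%:R * 2 + 1) * C1) * Pi + (d%:R * 2 + 1) * C0 * Pi); first ring.
by rewrite oddC; ring.
Qed.

(* The same recursion on polynomials: by Pascal's rule for the binomials, adding
   a point of weight 1 to a nonempty block (or forming a new one) raises it. *)
Lemma block_poly_step A s : (s = 0 -> A = 0)%N ->
  block_poly A.+1 s.+1 - block_poly A s.+1 = raise (4 * A + 3)%:R (block_poly A s).
Proof.
move=> s0_A0; apply/polyP => d; rewrite coefB !coef_block_poly.
case: d => [|d]; first by rewrite coefXM /block_coef !bin0 subrr.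
by rewrite coef_raise block_coef_step // coef_block_poly.
Qed.

(* A labelling of m points by k labels; ordered set partitions are exactly the
   families of fibres of the surjective labellings. *)
Definition fibres m k (lab : {ffun 'I_m -> 'I_k}) : {ffun 'I_k -> {set 'I_m}} :=
  [ffun j => [set i | lab i == j]].

Definition onto m k (lab : {ffun 'I_m -> 'I_k}) : bool := [forall j, exists i, lab i == j].

Lemma fibres_inj m k : injective (@fibres m k).
Proof.
move=> lab1 lab2 /ffunP eq_fib; apply/ffunP => i.
by have /setP/(_ i) := eq_fib (lab1 i); rewrite !ffunE !inE eqxx => /esym/eqP.
Qed.

Lemma partition_fibres m k (lab : {ffun 'I_m -> 'I_k}) :
  ordered_set_partition (fibres lab) = onto lab.
Proof.
rewrite /ordered_set_partition.
have -> : [forall j1, forall j2, (j1 != j2) ==> [disjoint fibres lab j1 & fibres lab j2]].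
  apply/forallP => j1; apply/forallP => j2; apply/implyP => ne_j.
  rewrite !ffunE -setI_eq0; apply/eqP/setP => i; rewrite !inE.
  by apply/negbTE; apply: contra ne_j => /andP [/eqP <- /eqP <-].
have -> : \bigcup_(j < k) fibres lab j == [set: 'I_m].
  apply/eqP/setP => i; rewrite inE; apply/bigcupP.
  by exists (lab i); rewrite // ffunE inE.
rewrite !andbT; apply/forallP/forallP => nz_fib j.
  by case/set0Pn: (nz_fib j) => i; rewrite ffunE inE => lab_i; apply/existsP; exists i.
by case/existsP: (nz_fib j) => i lab_i; apply/set0Pn; exists i; rewrite ffunE inE.
Qed.

Lemma partition_fibresP m k (I : {ffun 'I_k -> {set 'I_m}}) :
  ordered_set_partition I -> exists lab, I = fibres lab.
Proof.
case/andP => [/andP [_ /forallP disj] /eqP cover].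
have /fin_all_exists [lab labP] i : exists j, i \in I j.
  have /bigcupP [j _ Iij] : i \in \bigcup_(j < k) I j by rewrite cover inE.
  by exists j.
exists (finfun lab); apply/ffunP => j; rewrite !ffunE; apply/setP => i; rewrite inE ffunE.
apply/idP/eqP => [Iij | <- //]; apply/eqP; apply: contraT => ne_j.
by have /implyP/(_ ne_j)/disjointFr/(_ (labP i)) := forallP (disj (lab i)) j; rewrite Iij.
Qed.

Definition weight m (f : nat -> nat) k (lab : {ffun 'I_m -> 'I_k}) (j : 'I_k) : nat :=
  (\sum_(i < m | lab i == j) f i)%N.

Definition bsize m k (lab : {ffun 'I_m -> 'I_k}) (j : 'I_k) : nat := #|[set i | lab i == j]|.

Definition block_prod m (f : nat -> nat) k (lab : {ffun 'I_m -> 'I_k}) : {poly rat} :=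
  \prod_(j < k) block_poly (weight f lab j) (bsize lab j).

(* The generating polynomial of the inner double sum of P for k blocks. *)
Definition Phi m (f : nat -> nat) k : {poly rat} :=
  \sum_(lab : {ffun 'I_m -> 'I_k} | onto lab) block_prod f lab.

Definition ck g k : rat := (-1) ^+ k * ((2 * g - 3 + k)`!%:R / k`!%:R).

Definition Q g m (f : nat -> nat) : rat :=
  \sum_(1 <= k < m.+1) ck g k * (Phi m f k)`_(g - 2 + m).

Lemma P_as_Q g a : P g a = Q g (size a) (nth 0%N a).
Proof.
rewrite /P /Q; apply: eq_big_nat => k _; congr (_ * _).
rewrite /Phi coef_sum (reindex_inj (@fibres (size a) k)); last 2 first.
- exact: fibres_inj.
- by move=> I /partition_fibresP.
apply: eq_big => lab; first by rewrite partition_fibres.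
move=> _; rewrite (coef_prod _ (leqnn _)); apply: eq_bigr => d _.
apply: eq_bigr => j _; rewrite coef_block_poly /block_coef /asum ffunE.
by congr ('C(_.*2.+1, _)%:R * _); apply: eq_bigl => i; rewrite inE.
Qed.

Lemma weight_empty m f k (lab : {ffun 'I_m -> 'I_k}) j :
  bsize lab j = 0%N -> weight f lab j = 0%N.
Proof.
move/eqP; rewrite cards_eq0 => /eqP empty_j.
rewrite /weight big_pred0 // => i; apply/negbTE/negP => lab_i.
by have := in_set0 i; rewrite -empty_j inE lab_i.
Qed.

Lemma sum_weight m f k (lab : {ffun 'I_m -> 'I_k}) :
  (\sum_(j < k) weight f lab j)%N = (\sum_(i < m) f i)%N.
Proof.
rewrite /weight; under eq_bigr do rewrite big_mkcond.
rewrite exchange_big /=; apply: eq_bigr => i _.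
by rewrite -big_mkcond /= (big_pred1 (lab i)) // => j; rewrite eq_sym.
Qed.

(* Block sizes as sums, so that they can be split like the weights. *)
Lemma card_set_sum m (P : pred 'I_m) : #|[set i | P i]| = (\sum_(i < m | P i) 1)%N.
Proof. by rewrite -sum1_card; apply: eq_bigl => i; rewrite inE. Qed.

Lemma bsize_extend m k j0 (lab : {ffun 'I_m -> 'I_k}) j :
  bsize (extend (j0, lab)) j = (bsize lab j + (j0 == j))%N.
Proof.
rewrite /bsize !card_set_sum big_mkcond big_ord_recr /= extend_max -big_mkcond /=.
by congr (_ + _)%N; apply: eq_bigl => i; rewrite widen_lift extend_lift.
Qed.

Section AddPoint.
Variables (m k : nat) (f fx : nat -> nat).
Hypothesis fx_eq : forall i, (i < m)%N -> fx i = f i.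

Lemma weight_extend j0 (lab : {ffun 'I_m -> 'I_k}) j :
  weight fx (extend (j0, lab)) j = (weight f lab j + (if j0 == j then fx m else 0))%N.
Proof.
rewrite /weight big_mkcond big_ord_recr /= extend_max -big_mkcond /=.
congr (_ + _)%N; apply: eq_big => [i|i _]; first by rewrite widen_lift extend_lift.
exact: fx_eq.
Qed.

Lemma block_prod_extend j0 (lab : {ffun 'I_m -> 'I_k}) :
  block_prod fx (extend (j0, lab)) =
  block_poly (weight f lab j0 + fx m) (bsize lab j0).+1 *
  \prod_(j < k | j != j0) block_poly (weight f lab j) (bsize lab j).
Proof.
rewrite /block_prod (bigD1 j0) //= weight_extend bsize_extend eqxx addn1.
congr (_ * _); apply: eq_bigr => j ne_j.
by rewrite weight_extend bsize_extend eq_sym (negbTE ne_j) !addn0.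
Qed.

End AddPoint.

(* The effect of raising the weight of the new point from 0 to 1 when it
   carries label j0 and the old points are labelled by lab. *)
Definition insert_term m (f : nat -> nat) k (j0 : 'I_k) (lab : {ffun 'I_m -> 'I_k}) :
    {poly rat} :=
  raise (4 * weight f lab j0 + 3)%:R (block_poly (weight f lab j0) (bsize lab j0)) *
  \prod_(j < k | j != j0) block_poly (weight f lab j) (bsize lab j).

Lemma Phi_extend_diff m k (f f0 f1 : nat -> nat) :
  (forall i, (i < m)%N -> f0 i = f i) -> (forall i, (i < m)%N -> f1 i = f i) ->
  f0 m = 0%N -> f1 m = 1%N ->
  Phi m.+1 f1 k - Phi m.+1 f0 k =
  \sum_(j0 < k) \sum_(lab : {ffun 'I_m -> 'I_k} | onto (extend (j0, lab)))
    insert_term f j0 lab.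
Proof.
move=> f0_eq f1_eq f0m f1m; rewrite /Phi !(sum_extend (fun e => onto e)) -sumrB.
rewrite pair_big_dep; apply: eq_bigr => -[j0 lab] _ /=.
rewrite (block_prod_extend f1_eq) (block_prod_extend f0_eq) f0m f1m addn0 addn1 -mulrBl.
by rewrite block_poly_step //; apply: weight_empty.
Qed.

Lemma onto_extend m k j0 (lab : {ffun 'I_m -> 'I_k}) :
  onto (extend (j0, lab)) = [forall j, (j == j0) || [exists i, lab i == j]].
Proof.
apply/forallP/forallP => ontoE j.
  case/existsP: (ontoE j) => i; case: (unliftP ord_max i) => [i' ->|->].
    by rewrite extend_lift => lab_i'; apply/orP; right; apply/existsP; exists i'.
  by rewrite extend_max /= => /eqP ->; rewrite eqxx.
case/orP: (ontoE j) => [/eqP -> | /existsP [i lab_i]]; apply/existsP.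
  by exists ord_max; rewrite extend_max.
by exists (lift ord_max i); rewrite extend_lift.
Qed.

(* Old labellings that are already onto: the new point may join any block. *)
Lemma insert_terms_onto m f k (lab : {ffun 'I_m -> 'I_k}) :
  \sum_(j0 < k) insert_term f j0 lab = raise (4 * \sum_(i < m) f i + 3 * k)%:R (block_prod f lab).
Proof.
rewrite /insert_term raise_prod; congr raise.
by rewrite -natr_sum big_split /= -big_distrr /= sum_weight sum_nat_const card_ord (mulnC k).
Qed.

(* Old labellings missing exactly the label j0 come from labellings by one
   label fewer, relabelled to avoid j0; then the new point forms a block alone. *)
Definition relabel m k (j0 : 'I_k.+1) (lab0 : {ffun 'I_m -> 'I_k}) : {ffun 'I_m -> 'I_k.+1} :=
  [ffun i => lift j0 (lab0 i)].

Lemma relabel_inj m k j0 : injective (@relabel m k j0).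
Proof.
move=> lab1 lab2 /ffunP eq_lab; apply/ffunP => i.
by have := eq_lab i; rewrite !ffunE => /lift_inj.
Qed.

Lemma weight_relabel m f k j0 (lab0 : {ffun 'I_m -> 'I_k}) j :
  weight f (relabel j0 lab0) (lift j0 j) = weight f lab0 j.
Proof. by apply: eq_bigl => i; rewrite ffunE (inj_eq lift_inj). Qed.

Lemma bsize_relabel m k j0 (lab0 : {ffun 'I_m -> 'I_k}) j :
  bsize (relabel j0 lab0) (lift j0 j) = bsize lab0 j.
Proof. by rewrite /bsize !card_set_sum; apply: eq_bigl => i; rewrite ffunE (inj_eq lift_inj). Qed.

Lemma bsize_relabel_missing m k j0 (lab0 : {ffun 'I_m -> 'I_k}) :
  bsize (relabel j0 lab0) j0 = 0%N.
Proof. by rewrite /bsize card_set_sum big_pred0 // => i; rewrite ffunE lift_eqF. Qed.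

(* When the new point forms a block alone, raising that block gives 3x. *)
Lemma insert_term_relabel m f k j0 (lab0 : {ffun 'I_m -> 'I_k}) :
  insert_term f j0 (relabel j0 lab0) = 3%:R *: ('X * block_prod f lab0).
Proof.
rewrite /insert_term bsize_relabel_missing weight_empty ?bsize_relabel_missing //.
rewrite block_poly00 /raise derivC mulr0 scaler0 subr0 (reindex_inj (lift j0)); last 2 first.
- exact: lift_inj.
- by move=> j; rewrite eq_sym => /unlift_some [j' -> _]; exists j'.
under eq_bigl do rewrite eq_sym neq_lift.
under eq_bigr do rewrite weight_relabel bsize_relabel.
by rewrite -!mul_polyC mulr1 muln0 add0n mulrA (mulrC 3%:P).
Qed.

Lemma insert_terms_missing m f k (j0 : 'I_k.+1) :
  \sum_(lab : {ffun 'I_m -> 'I_k.+1} | onto (extend (j0, lab)) && ~~ onto lab)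
    insert_term f j0 lab = 3%:R *: ('X * Phi m f k).
Proof.
rewrite (reindex_inj (relabel j0)); last 2 first.
- exact: relabel_inj.
- move=> lab /andP [onto_ext not_onto].
  have /fin_all_exists [lab0 lab0P] i : exists j, lab i = lift j0 j.
    have /unlift_some [j -> _] : j0 != lab i; last by exists j.
    apply: contra not_onto => /eqP j0_lab; apply/forallP => j.
    have /forallP/(_ j)/orP [/eqP -> | //] := etrans (esym (onto_extend j0 lab)) onto_ext.
    by apply/existsP; exists i; rewrite j0_lab.
  by exists (finfun lab0); apply/ffunP => i; rewrite !ffunE lab0P.
rewrite /Phi mulr_sumr scaler_sumr; apply: eq_big => [lab0 | lab0 _]; last first.
  exact: insert_term_relabel.
have -> : onto (relabel j0 lab0) = false.
  by apply/negbTE/forallP => /(_ j0) /existsP [i]; rewrite ffunE lift_eqF.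
rewrite andbT onto_extend; apply/forallP/forallP => ontoE j.
  have /orP [] := ontoE (lift j0 j); first by rewrite lift_eqF.
  by case/existsP => i; rewrite ffunE (inj_eq lift_inj) => lab0_i; apply/existsP; exists i.
case: (unliftP j0 j) => [j' -> | ->]; last by rewrite eqxx.
case/existsP: (ontoE j') => i lab0_i; apply/orP; right; apply/existsP; exists i.
by rewrite ffunE (inj_eq lift_inj).
Qed.

Lemma Phi_step m k (f f0 f1 : nat -> nat) :
  (forall i, (i < m)%N -> f0 i = f i) -> (forall i, (i < m)%N -> f1 i = f i) ->
  f0 m = 0%N -> f1 m = 1%N ->
  Phi m.+1 f1 k.+1 - Phi m.+1 f0 k.+1 =
  raise (4 * \sum_(i < m) f i + 3 * k.+1)%:R (Phi m f k.+1) +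
  (3 * k.+1)%:R *: ('X * Phi m f k).
Proof.
move=> f0_eq f1_eq f0m f1m; rewrite (Phi_extend_diff k.+1 f0_eq f1_eq f0m f1m).
under eq_bigr do rewrite (bigID (fun lab => onto lab)) /=.
rewrite big_split /=; congr (_ + _).
  transitivity (\sum_(j0 < k.+1)
                  \sum_(lab : {ffun 'I_m -> 'I_k.+1} | onto lab) insert_term f j0 lab).
    apply: eq_bigr => j0 _; apply: eq_bigl => lab; apply/andb_idl => onto_lab.
    by rewrite onto_extend; apply/forallP => j; rewrite (forallP onto_lab) orbT.
  by rewrite exchange_big /=; under eq_bigr do rewrite insert_terms_onto; rewrite raise_sum.
under eq_bigr do rewrite insert_terms_missing.
by rewrite sumr_const card_ord scalerMnl natrM mulr_natr.
Qed.

Lemma Phi_no_label m f : (0 < m)%N -> Phi m f 0 = 0.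
Proof. by move=> m_gt0; rewrite /Phi big1 // => lab _; case: (lab (Ordinal m_gt0)). Qed.

Lemma Phi_too_many_labels m f : Phi m f m.+1 = 0.
Proof.
rewrite /Phi big_pred0 // => lab; apply/negP => /forallP lab_onto.
have : [set: 'I_m.+1] \subset [set lab i | i in 'I_m].
  by apply/subsetP => j _; case/existsP: (lab_onto j) => i /eqP <-; apply/imsetP; exists i.
move/subset_leq_card/leq_trans/(_ (leq_imset_card _ _)).
by rewrite cardsT !card_ord ltnn.
Qed.

Lemma ck_succ g k : (2 <= g)%N -> ck g k.+1 * k.+1%:R = - (ck g k * (2 * g - 2 + k)%:R).
Proof.
move=> g_ge2; rewrite /ck.
have -> : (2 * g - 3 + k.+1 = (2 * g - 3 + k).+1)%N by lia.
have -> : (2 * g - 2 + k = (2 * g - 3 + k).+1)%N by lia.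
rewrite !factS !natrM exprS.
have kfact_neq0 : k`!%:R != 0 :> rat by rewrite pnatr_eq0 -lt0n fact_gt0.
have kS_neq0 : k.+1%:R != 0 :> rat by rewrite pnatr_eq0.
by field; rewrite kfact_neq0 /= addrC natr1.
Qed.

Lemma Q_step g m (f f0 f1 : nat -> nat) : (2 <= g)%N -> (1 <= m)%N ->
  (forall i, (i < m)%N -> f0 i = f i) -> (forall i, (i < m)%N -> f1 i = f i) ->
  f0 m = 0%N -> f1 m = 1%N ->
  Q g m.+1 f1 - Q g m.+1 f0 =
  Q g m f * (4 * (\sum_(i < m) f i)%:R - 8 * g%:R + 10 - 2 * m%:R : rat).
Proof.
move=> g_ge2 m_ge1 f0_eq f1_eq f0m f1m.
set A := (\sum_(i < m) f i)%N; set N := (g - 2 + m)%N.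
have term_step k : (1 <= k < m.+2)%N ->
    ck g k * (Phi m.+1 f1 k)`_N.+1 - ck g k * (Phi m.+1 f0 k)`_N.+1 =
    ck g k * ((4 * A + 3 * k)%:R - 2 * N%:R) * (Phi m f k)`_N +
    ck g k * (3 * k)%:R * (Phi m f k.-1)`_N.
  case: k => [// | k] _; rewrite -mulrBr -coefB (Phi_step k f0_eq f1_eq f0m f1m).
  by rewrite coefD coef_raise coefZ coefXM /=; ring.
rewrite /Q -sumrB addnS -/N (eq_big_nat _ _ term_step).
rewrite big_split /= big_nat_recr //= Phi_too_many_labels coef0 mulr0 addr0.
rewrite [\sum_(1 <= i < m.+2) _]big_nat_recl //= Phi_no_label // coef0 mulr0 add0r.
rewrite -big_split /= mulr_suml; apply: eq_big_nat => k /andP [k_ge1 _].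
have -> : ck g k.+1 * (3 * k.+1)%:R = 3 * (ck g k.+1 * k.+1%:R) by rewrite natrM; ring.
rewrite ck_succ // /N !natrD natrB // natrB; last by lia.
by rewrite !natrM; ring.
Qed.

Unset Implicit Arguments.

Theorem proposition5p5 (g n : nat) (a : seq nat) :
  (2 <= g)%N -> (1 <= n)%N -> size a = n ->
  P g (rcons a 1%N) - P g (rcons a 0%N) =
  P g a * (4 * (sumn a)%:R - 8 * g%:R + 10 - 2 * n%:R : rat).
Proof.
move=> g_ge2 n_ge1 size_a; rewrite !P_as_Q !size_rcons size_a.
have -> : sumn a = (\sum_(i < n) nth 0%N a i)%N.
  by rewrite -size_a sumnE (big_nth 0%N) big_mkord.
apply: Q_step => // [i lt_in | i lt_in | |]; rewrite nth_rcons size_a ?lt_in //.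
all: by rewrite ltnn eqxx.
Qed.
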